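(* Let $d,s\geq 2$ be integers and let $t\geq 1$ be a real number with $t\leq d^{1/s}/s$. Let $G$ be a $K_{s,s}$-free graph of minimum degree at least $d$, and let $v$ be a vertex of $G$. Then fewer than $st$ vertices $u\in V(G)$ satisfy \[ |N(u)\cap N(v)|\geq \frac{4}{t}\,|N(v)|.\]
   Context: $N(x)$ denotes the neighbourhood of a vertex $x$ in $G$. A graph is $K_{s,s}$-free if it does not contain the complete bipartite graph $K_{s,s}$ as a (not necessarily induced) subgraph. *)

From HB Require Import structures.
From mathcomp Require Import all_boot all_order all_algebra.
From mathcomp Require Import reals exp.
Set Implicit Arguments. Unset Strict Implicit. Unset Printing Implicit Defensive.

Definition simple_graph (T : finType) (e : rel T) : Prop :=
  symmetric e /\ irreflexive e.

Definition nbhd (T : finType) (e : rel T) (x : T) : {set T} := [set y | e x y].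

Definition min_deg_ge (T : finType) (e : rel T) (d : nat) : Prop :=
  forall x : T, d <= #|nbhd e x|.

Definition has_Kss (T : finType) (e : rel T) (s : nat) : Prop :=
  exists A B : {set T}, [/\ #|A| = s, #|B| = s, [disjoint A & B] &
    forall a b, a \in A -> b \in B -> e a b].

Definition Kss_free (T : finType) (e : rel T) (s : nat) : Prop := ~ has_Kss e s.

(* Let U be the set of vertices u with |N(u) ∩ N(v)| >= 4|N(v)|/t and, for
   w in N(v), let d_w = |U ∩ N(w)|.  Double counting the edges between U and
   N(v) gives sum_w d_w >= 4|U||N(v)|/t.  As G is K_{s,s}-free, an s-subset of
   U has fewer than s common neighbours, so sum_w C(d_w, s) <= (s-1) C(|U|, s)
   (the Kővári–Sós–Turán count); by the power-mean inequality this bounds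
   (sum_w (d_w - s + 1))^s by |N(v)|^(s-1) (s-1) |U|^s.  If |U| >= s t, the two
   bounds force 3^s |N(v)| <= (s-1) t^s, contradicting |N(v)| >= d >= (s t)^s. *)
From HB Require Import structures.
From mathcomp Require Import all_boot all_order all_algebra.
From mathcomp Require Import reals exp.
From mathcomp Require Import ring lra.

Set Implicit Arguments.
Unset Strict Implicit.
Unset Printing Implicit Defensive.
Import Order.TTheory GRing.Theory Num.Theory.
Local Open Scope ring_scope.

Lemma card_set_sum (T : finType) (A : {set T}) (P : pred T) :
  #|[set x in A | P x]| = (\sum_(x in A) P x)%N.
Proof.
rewrite -sum1_card big_mkcond [RHS]big_mkcond /=; apply: eq_bigr => x _.
by rewrite !inE; case: (x \in A); case: (P x).
Qed.

Lemma double_count (I J : finType) (r : I -> J -> bool) (A : {set I}) (B : {set J}) :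
  (\sum_(i in A) #|[set j in B | r i j]| = \sum_(j in B) #|[set i in A | r i j]|)%N.
Proof.
under eq_bigr do rewrite card_set_sum.
by rewrite exchange_big; under [RHS]eq_bigr do rewrite card_set_sum.
Qed.

Lemma ffact_le_expn (n m : nat) : (n ^_ m <= n ^ m)%N.
Proof.
rewrite ffact_prod -[in leqRHS](card_ord m) -prod_nat_const.
by apply: leq_prod => i _; apply: leq_subr.
Qed.

Lemma expn_subn_le_ffact (n m : nat) : ((n - m.-1) ^ m <= n ^_ m)%N.
Proof.
rewrite ffact_prod -[in leqLHS](card_ord m) -prod_nat_const.
apply: leq_prod => i _; apply: leq_sub2l.
by rewrite card_ord -ltnS (leq_trans (ltn_ord i)) // leqSpred.
Qed.

Section KovariSosTuran.

Variables (T : finType) (e : rel T) (s : nat).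
Hypotheses (e_simple : simple_graph e) (e_free : Kss_free e s).

Lemma card_common_nbhd_lt (S : {set T}) :
  #|S| = s -> (#|[set w | S \subset nbhd e w]| < s)%N.
Proof.
have [e_sym e_irr] := e_simple.
set W := [set w | _] => cardS; rewrite ltnNge; apply/negP => sW.
have : (0 < #|[set B : {set T} | B \subset W & #|B| == s]|)%N by rewrite cards_draws bin_gt0.
case/card_gt0P => B; rewrite inE => /andP[/subsetP BW /eqP cardB].
have SB x y : x \in S -> y \in B -> e y x.
  by move=> xS /BW; rewrite inE => /subsetP/(_ x xS); rewrite inE.
apply: e_free; exists S, B; split=> // [|x y xS yB]; last by rewrite e_sym SB.
rewrite disjoint_subset; apply/subsetP => x xS; rewrite inE.
by apply/negP => xB; have := SB x x xS xB; rewrite e_irr.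
Qed.

Lemma sum_bin_card_nbhd_le (A U : {set T}) :
  (\sum_(w in A) 'C(#|U :&: nbhd e w|, s) <= s.-1 * 'C(#|U|, s))%N.
Proof.
set D := [set S : {set T} | S \subset U & #|S| == s].
have -> : (\sum_(w in A) 'C(#|U :&: nbhd e w|, s) =
           \sum_(w in A) #|[set S in D | S \subset nbhd e w]|)%N.
  apply: eq_bigr => w _; rewrite -cards_draws; apply: eq_card => S.
  by rewrite !inE subsetI andbAC.
rewrite double_count -cards_draws -/D mulnC -sum_nat_const leq_sum // => S.
rewrite inE => /andP[_ /eqP cardS]; have W_lt := card_common_nbhd_lt cardS.
rewrite -ltnS (ltn_predK W_lt); apply: leq_ltn_trans W_lt.
by apply: subset_leq_card; apply/subsetP => w; rewrite !inE => /andP[].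
Qed.

Lemma sum_expn_card_nbhd_le (A U : {set T}) :
  (\sum_(w in A) (#|U :&: nbhd e w| - s.-1) ^ s <= s.-1 * #|U| ^ s)%N.
Proof.
apply: leq_trans (_ : _ <= \sum_(w in A) 'C(#|U :&: nbhd e w|, s) * s`!)%N _.
  by apply: leq_sum => w _; rewrite bin_ffact expn_subn_le_ffact.
rewrite -big_distrl /= (leq_trans (leq_mul (sum_bin_card_nbhd_le A U) (leqnn _))) //.
by rewrite -mulnA bin_ffact leq_mul2l ffact_le_expn orbT.
Qed.

Lemma sum_card_setI_nbhd (A U : {set T}) :
  (\sum_(w in A) #|U :&: nbhd e w| = \sum_(u in U) #|nbhd e u :&: A|)%N.
Proof.
have [e_sym _] := e_simple.
transitivity (\sum_(w in A) #|[set u in U | e w u]|)%N.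
  by apply: eq_bigr => w _; apply: eq_card => u; rewrite !inE.
rewrite double_count; apply: eq_bigr => u _; apply: eq_card => w.
by rewrite !inE e_sym andbC.
Qed.

End KovariSosTuran.

Lemma rearrangement_exprn (R : realDomainType) (a b : R) (m : nat) :
  0 <= a -> 0 <= b -> a ^+ m * b + b ^+ m * a <= a ^+ m.+1 + b ^+ m.+1.
Proof.
move=> a_ge0 b_ge0.
have : 0 <= (a ^+ m - b ^+ m) * (a - b).
  have [ab|ba] := lerP a b.
    by apply: mulr_le0; rewrite subr_le0 // lerXn2r.
  by apply: mulr_ge0; rewrite subr_ge0 ?lerXn2r ?ltW.
rewrite !exprSr; nra.
Qed.

Section PowerMean.

Variables (R : realDomainType) (I : finType) (A : {set I}) (y : I -> R).
Hypothesis y_ge0 : forall i, 0 <= y i.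

Lemma chebyshev_sum_exprn (m : nat) :
  (\sum_(i in A) y i ^+ m) * (\sum_(i in A) y i) <= #|A|%:R * \sum_(i in A) y i ^+ m.+1.
Proof.
have lhsE : (\sum_(i in A) y i ^+ m) * (\sum_(i in A) y i) =
            \sum_(i in A) \sum_(j in A) y i ^+ m * y j.
  by rewrite mulr_suml; under eq_bigr do rewrite mulr_sumr.
have rhsE : #|A|%:R * \sum_(i in A) y i ^+ m.+1 =
            \sum_(i in A) \sum_(j in A) y j ^+ m.+1.
  by rewrite sumr_const mulr_natl.
suff : (\sum_(i in A) y i ^+ m) * (\sum_(i in A) y i) *+ 2 <=
       #|A|%:R * (\sum_(i in A) y i ^+ m.+1) *+ 2 by rewrite lerMn2r.
rewrite !mulr2n {1}lhsE lhsE [X in _ + X <= _]exchange_big {1}rhsE rhsE.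
rewrite [X in _ <= X + _]exchange_big -!big_split.
apply: ler_sum => i _; rewrite -!big_split; apply: ler_sum => j _.
exact: rearrangement_exprn.
Qed.

Lemma power_mean_exprn (m : nat) :
  (\sum_(i in A) y i) ^+ m.+1 <= #|A|%:R ^+ m * \sum_(i in A) y i ^+ m.+1.
Proof.
have sum_ge0 : 0 <= \sum_(i in A) y i by apply: sumr_ge0.
elim: m => [|m IHm]; first by rewrite mul1r.
rewrite exprSr; apply: le_trans (ler_wpM2r sum_ge0 IHm) _.
rewrite exprSr -!mulrA ler_wpM2l ?exprn_ge0 //.
exact: chebyshev_sum_exprn.
Qed.

End PowerMean.

Lemma exprn_le_of_le_powR_inv (R : realType) (n : nat) (x y : R) :
  (0 < n)%N -> 0 <= x -> 0 <= y -> x <= y `^ n%:R^-1 -> x ^+ n <= y.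
Proof.
move=> n_gt0 x_ge0 y_ge0 x_le.
apply: le_trans (lerXn2r _ _ _ x_le) _; rewrite ?nnegrE ?powR_ge0 //.
by rewrite -powR_mulrn ?powR_ge0 // -powRrM mulVf ?powRr1 // pnatr_eq0 -lt0n.
Qed.

Lemma lt_of_codegree_bounds (R : realFieldType) (r : nat) (t n k Y : R) :
  0 < t -> (r.+1%:R * t) ^+ r.+1 <= n ->
  k * (4 / t * n) <= Y + n * r%:R ->
  Y ^+ r.+1 <= n ^+ r * (r%:R * k ^+ r.+1) ->
  k < r.+1%:R * t.
Proof.
move=> t_gt0 n_ge sumY_ge Y_le; rewrite ltNge; apply/negP => k_ge.
have n_gt0 : 0 < n by apply: lt_le_trans n_ge; rewrite exprn_gt0 ?mulr_gt0.
pose q := k / t.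
have kE : k = q * t by rewrite divfK ?gt_eqF.
have q_ge : r.+1%:R <= q by rewrite ler_pdivlMr.
have q_gt0 : 0 < q by apply: lt_le_trans q_ge.
have Y_ge : 3 * q * n <= Y.
  have kqE : k * (4 / t * n) = 4 * q * n by rewrite /q; field; rewrite gt_eqF.
  have : 0 <= n * (q - r.+1%:R) by rewrite mulr_ge0 ?subr_ge0 // ltW.
  move: sumY_ge; rewrite kqE -natr1; lra.
clearbody q.
have qn_ge0 : 0 <= 3 * q * n by rewrite !mulr_ge0 // ltW.
have Y_pow : (3 * q * n) ^+ r.+1 <= Y ^+ r.+1.
  by apply: lerXn2r; rewrite ?nnegrE ?(le_trans qn_ge0).
have pow_le : 3 ^+ r.+1 * n <= r%:R * t ^+ r.+1.
  have scale_gt0 : 0 < q ^+ r.+1 * n ^+ r by rewrite mulr_gt0 ?exprn_gt0.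
  have lhsE : q ^+ r.+1 * n ^+ r * (3 ^+ r.+1 * n) = (3 * q * n) ^+ r.+1.
    by rewrite !exprMn (exprSr n); move: (q ^+ _) (n ^+ _) (3 ^+ _) => a b c; ring.
  have rhsE : q ^+ r.+1 * n ^+ r * (r%:R * t ^+ r.+1) = n ^+ r * (r%:R * k ^+ r.+1).
    by rewrite kE exprMn; move: (q ^+ _) (n ^+ _) (t ^+ _) => a b c; ring.
  by rewrite -(ler_pM2l scale_gt0) lhsE rhsE (le_trans Y_pow Y_le).
have : 3 ^+ r.+1 * r.+1%:R ^+ r.+1 * t ^+ r.+1 <= r%:R * t ^+ r.+1.
  apply: le_trans pow_le; rewrite -mulrA -exprMn ler_wpM2l ?exprn_ge0 //.
rewrite ler_pM2r ?exprn_gt0 // -!natrX -natrM ler_nat leqNgt => /negP; apply.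
by rewrite (leq_trans (ltnW (ltn_expl r.+1 (isT : (1 < 3)%N)))) // leq_pmulr // expn_gt0.
Qed.

Theorem lemma2p1 (R : realType) (d s : nat) (t : R) (T : finType) (e : rel T) (v : T) :
  (2 <= d)%N -> (2 <= s)%N ->
  1 <= t -> t <= (d%:R `^ (s%:R)^-1) / s%:R ->
  simple_graph e -> Kss_free e s -> min_deg_ge e d ->
  #|[set u | 4 / t * #|nbhd e v|%:R <= #|nbhd e u :&: nbhd e v|%:R]|%:R < s%:R * t.
Proof.
move=> _; case: s => // r _ t_ge1 t_le e_simple e_free e_deg.
set A := nbhd e v; set U := [set u | _].
pose Y : R := \sum_(w in A) (#|U :&: nbhd e w| - r)%:R.
have t_gt0 : 0 < t := lt_le_trans ltr01 t_ge1.
apply: (@lt_of_codegree_bounds _ r t #|A|%:R _ Y) => //.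
- have d_le : d%:R <= #|A|%:R :> R by rewrite ler_nat; apply: e_deg.
  apply: le_trans _ d_le.
  apply: exprn_le_of_le_powR_inv => //; first by rewrite mulr_ge0 // ltW.
  by rewrite mulrC -ler_pdivlMr ?ltr0Sn.
- have codeg_sum : #|U|%:R * (4 / t * #|A|%:R) <= (\sum_(w in A) #|U :&: nbhd e w|)%:R :> R.
    rewrite sum_card_setI_nbhd // natr_sum mulr_natl -sumr_const.
    by apply: ler_sum => u; rewrite inE.
  apply: le_trans codeg_sum _; rewrite -natrM /Y -natr_sum -natrD ler_nat.
  by rewrite -sum_nat_const -big_split leq_sum //= => w _; rewrite addnC -leq_subLR.
- apply: le_trans (power_mean_exprn _ _ _) _ => [w|]; first exact: ler0n.
  rewrite ler_wpM2l ?exprn_ge0 //.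
  have := sum_expn_card_nbhd_le e_simple e_free A U.
  by rewrite -(ler_nat R) natr_sum natrM natrX; under eq_bigr do rewrite natrX.
Qed.
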